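(* Let $A$ be a uniformly random $k\times n$ binary matrix, $\mathbf{s}$ a uniformly random $k$-bit binary vector, and $\mathbf{z}=f(\mathbf{s}A)+\mathbf{v}$ where the bits of $\mathbf{v}\in\{0,1\}^D$ are i.i.d. Bernoulli. Let $\mathbf{c}$ be a uniformly random $n$-bit vector chosen independently of everything else. For $i\in\{1,\dots,k\}$, let $A'$ be the matrix obtained from $A$ by replacing its $i$-th row $(A)_i$ with $(A)_i+\mathbf{c}$, and let $hyb_i$ denote the distribution of the bitstring $\langle A',\mathbf{z}\rangle$. If $s_i=1$, then $hyb_i$ is the uniform distribution on $\{0,1\}^{kn+D}$.
   Context: All arithmetic is over $GF(2)$; $+$ denotes XOR. The function $f:\{0,1\}^n\to\{0,1\}^D$: given positive integers $n,p$ with $D=n-p$ and a Boolean function $g:\{0,1\}^p\to\{0,1\}$ whose algebraic normal form contains only non-linear terms (every monomial has degree at least two), $f(\mathbf{x})=\mathbf{y}$ has bits $y_i=x_i+g(x_{i+1},\dots,x_{i+p})$ for $1\le i\le D$. Such $f$ maps the uniform distribution on $\{0,1\}^n$ to the uniform distribution on $\{0,1\}^D$. *)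

From HB Require Import structures.
From mathcomp Require Import all_boot all_order all_algebra.
Set Implicit Arguments. Unset Strict Implicit. Unset Printing Implicit Defensive.
Import Order.TTheory GRing.Theory Num.Theory.
Local Open Scope ring_scope.

Notation F2 := ('F_2 : finFieldType).

(* bit m of a row vector (0-based), 0 if out of range *)
Definition bit n (x : 'rV[F2]_n) (m : nat) : F2 :=
  if insub m is Some j then x 0 j else 0.

Definition anf_nonlinear p (g : 'rV[F2]_p -> F2) : Prop :=
  exists a : {set 'I_p} -> F2,
    (forall S : {set 'I_p}, (#|S| < 2)%N -> a S = 0) /\
    (forall x, g x = \sum_(S : {set 'I_p}) a S * \prod_(j in S) x 0 j).

(* f(x)_j = x_j + g(x_{j+1},...,x_{j+p}), for 0 <= j < D = n - p (0-based) *)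
Definition fmap n p (g : 'rV[F2]_p -> F2) (x : 'rV[F2]_n) : 'rV[F2]_(n - p) :=
  \row_(j < n - p) (bit x j + g (\row_(t < p) bit x (j + 1 + t)%N)).

(* the experiment: outcome (A, s, c, v) *)
Definition outcome k n D := ('M[F2]_(k, n) * 'rV[F2]_k * 'rV[F2]_n * 'rV[F2]_D)%type.

Definition bern (R : realFieldType) (eta : R) (b : F2) : R :=
  if b == 1 then eta else 1 - eta.

Definition weight (R : realFieldType) (eta : R) k n D (w : outcome k n D) : R :=
  let: (A, s, c, v) := w in
  (2 ^+ (k * n))^-1 * (2 ^+ k)^-1 * (2 ^+ n)^-1 * \prod_(j < D) bern eta (v 0 j).

Definition Pr (R : realFieldType) (eta : R) k n D (E : pred (outcome k n D)) : R :=
  \sum_(w : outcome k n D | E w) weight eta w.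

Definition Aprime k n (i : 'I_k) (A : 'M[F2]_(k, n)) (c : 'rV[F2]_n) : 'M[F2]_(k, n) :=
  \matrix_(r < k, j < n) (A r j + (r == i)%:R * c 0 j).

Definition zval k n p (g : 'rV[F2]_p -> F2) (A : 'M[F2]_(k, n)) (s : 'rV[F2]_k)
  (v : 'rV[F2]_(n - p)) : 'rV[F2]_(n - p) := fmap g (s *m A) + v.

(* hyb_i conditioned on s_i = 1: probability that <A', z> = <M, y> *)
Definition hyb_cond (R : realFieldType) (eta : R) k n p (g : 'rV[F2]_p -> F2)
  (i : 'I_k) (M : 'M[F2]_(k, n)) (y : 'rV[F2]_(n - p)) : R :=
  Pr eta (fun w : outcome k n (n - p) => let: (A, s, c, v) := w in
            [&& Aprime i A c == M, zval g A s v == y & s 0 i == 1])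
  / Pr eta (fun w : outcome k n (n - p) => let: (A, s, c, v) := w in s 0 i == 1).

From mathcomp Require Import all_boot all_order all_algebra.
From mathcomp Require Import zify ring.
Import Order.TTheory GRing.Theory Num.Theory.
Local Open Scope ring_scope.

(* Fix s with s_i = 1 and the noise v. Since A |-> A' is an involution for fixed c,
   the outcome <A', z> = <M, y> forces A = Aprime i M c, and then s A = s M + c, so
   z = f(s M + c) + v. The map x |-> (f x, x_{D+1..n}) is a bijection from {0,1}^n onto
   {0,1}^D x {0,1}^p (x is recovered from its last bit downwards), so every fibre of f
   has exactly 2^p points and exactly 2^p of the 2^(kn+n) choices of (A, c) produce <M, y>. This holds for every g. *)

Lemma addF2K (a b : F2) : a + b + b = a.
Proof. by rewrite -addrA addrr_pchar2 ?addr0 // pchar_Fp. Qed.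

Lemma addF2mxK m1 m2 (A B : 'M[F2]_(m1, m2)) : A + B + B = A.
Proof. by apply/matrixP => r j; rewrite !mxE addF2K. Qed.

Lemma card_rV_F2 m : #|{: 'rV[F2]_m}| = (2 ^ m)%N.
Proof. by rewrite card_mx card_Fp // mul1n. Qed.

Lemma bit_ord n (x : 'rV[F2]_n) (j : 'I_n) : bit x j = x 0 j.
Proof. by rewrite /bit valK. Qed.

Lemma bit_default n (x : 'rV[F2]_n) m : (n <= m)%N -> bit x m = 0.
Proof. by move=> nm; rewrite /bit insubF // ltnNge nm. Qed.

Section FmapFibers.
Variables (n p : nat) (g : 'rV[F2]_p -> F2).
Hypothesis p_le_n : (p <= n)%N.

Lemma bit_fmap (x : 'rV[F2]_n) m : (m < n - p)%N ->
  bit x m = bit (fmap g x) m + g (\row_(t < p) bit x (m + 1 + t)).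
Proof.
by move=> mD; rewrite -[m]/(nat_of_ord (Ordinal mD)) bit_ord mxE addF2K.
Qed.

Definition fmap_tail (x : 'rV[F2]_n) : 'rV[F2]_(n - p) * 'rV[F2]_p :=
  (fmap g x, \row_(t < p) bit x (n - p + t)).

Lemma fmap_tail_inj : injective fmap_tail.
Proof.
move=> x x' [eq_f /rowP eq_tail].
(* Downward induction: bit m is determined by f(x)_m and bits m+1..m+p. *)
have eq_bit d m : (n - d <= m)%N -> bit x m = bit x' m.
  elim: d m => [|d IHd] m le_m; first by rewrite !bit_default // -(subn0 n).
  have [|lt_m] := leqP (n - d) m; first exact: IHd.
  have [le_Dm | lt_mD] := leqP (n - p) m.
    have [le_nm | lt_mn] := leqP n m; first by rewrite !bit_default.
    have tp : (m - (n - p) < p)%N by lia.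
    by have := eq_tail (Ordinal tp); rewrite !mxE /= subnKC.
  rewrite !(@bit_fmap _ m lt_mD) eq_f.
  by congr (_ + g _); apply/rowP => t; rewrite !mxE IHd //; lia.
by apply/rowP => j; rewrite -!bit_ord (eq_bit n) // subnn.
Qed.

Lemma fmap_tail_bij : bijective fmap_tail.
Proof.
apply: (inj_card_bij fmap_tail_inj).
by rewrite card_prod !card_rV_F2 -expnD subnK.
Qed.

Lemma card_fmap_fiber (z : 'rV[F2]_(n - p)) :
  #|[set x | fmap g x == z]| = (2 ^ p)%N.
Proof.
have -> : [set x | fmap g x == z] = fmap_tail @^-1: setX [set z] setT.
  by apply/setP => x; rewrite !inE andbT.
rewrite on_card_preimset; last exact: onW_bij fmap_tail_bij.
by rewrite cardsX cards1 cardsT card_rV_F2 mul1n.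
Qed.

End FmapFibers.

Lemma sum_prod_bern (R : realFieldType) (eta : R) D :
  \sum_(v : 'rV[F2]_D) \prod_(j < D) bern eta (v 0 j) = 1.
Proof.
rewrite (reindex (fun f : {ffun 'I_D -> F2} => \row_j f j)); last first.
  exists (fun v : 'rV[F2]_D => [ffun j => v 0 j]) => [f _ | v _].
    by apply/ffunP => j; rewrite ffunE mxE.
  by apply/rowP => j; rewrite !mxE ffunE.
under eq_bigr => f _ do under eq_bigr => j _ do rewrite mxE.
rewrite -(bigA_distr_bigA (fun (j : 'I_D) (b : F2) => bern eta b)) /=.
apply: big1 => j _.
rewrite (bigD1 0) //= (bigD1 1) //= big1 => [|b /andP[b0 b1]].
  by rewrite /bern !eqxx /= addr0 subrK.
by move: b b0 b1; case=> -[|[|]].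
Qed.

Section Experiment.
Variables (R : realFieldType) (eta : R) (k n D : nat).

Definition uniform_mass : R := (2 ^+ (k * n))^-1 * (2 ^+ k)^-1 * (2 ^+ n)^-1.

Lemma Pr_count (E : pred (outcome k n D)) (P : pred 'rV[F2]_k) (m : nat) :
  (forall s v, #|[pred Ac : 'M[F2]_(k, n) * 'rV[F2]_n | E (Ac.1, s, Ac.2, v)]|
     = (P s * m)%N) ->
  Pr eta E = uniform_mass * (#|P| * m)%:R.
Proof.
move=> countE.
pose to_outcome (x : ('rV[F2]_k * 'rV[F2]_D) * ('M[F2]_(k, n) * 'rV[F2]_n))
  : outcome k n D := (x.2.1, x.1.1, x.2.2, x.1.2).
have to_outcome_bij : bijective to_outcome.
  exists (fun w : outcome k n D => let: (A, s, c, v) := w in ((s, v), (A, c))).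
    by move=> [[s v] [A c]].
  by move=> [[[A s] c] v].
rewrite /Pr (reindex to_outcome) /=; last exact: onW_bij.
transitivity (\sum_sv \sum_(Ac | E (to_outcome (sv, Ac)))
                weight eta (to_outcome (sv, Ac))).
  by rewrite pair_big_dep; apply: eq_big => -[sv Ac].
rewrite (eq_bigr (fun sv : 'rV[F2]_k * 'rV[F2]_D => (P sv.1 * m)%:R
                   * (uniform_mass * \prod_(j < D) bern eta (sv.2 0 j)))); last first.
  move=> [s v] _ /=; rewrite -(countE s v) mulr_natl -sumr_const.
  by apply: eq_big => // -[A c].
rewrite -(pair_bigA _ (fun (s : 'rV[F2]_k) (v : 'rV[F2]_D) => (P s * m)%:R
                   * (uniform_mass * \prod_(j < D) bern eta (v 0 j)))) /=.
under eq_bigr => s _ do rewrite -!big_distrr /= sum_prod_bern mulr1.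
have sumP : \sum_s (P s : nat) = #|P| by rewrite -sum1_card [RHS]big_mkcond.
by rewrite -big_distrl mulrC -natr_sum -big_distrl /= sumP.
Qed.

End Experiment.

Arguments Pr_count {R eta k n D} E P m.

Section Hybrid.
Variables (k n p : nat) (g : 'rV[F2]_p -> F2) (i : 'I_k).

Lemma Aprime_invol (A : 'M[F2]_(k, n)) c : Aprime i (Aprime i A c) c = A.
Proof. by apply/matrixP => r j; rewrite !mxE addF2K. Qed.

Lemma mulmx_Aprime (s : 'rV[F2]_k) (A : 'M[F2]_(k, n)) c :
  s 0 i = 1 -> s *m Aprime i A c = s *m A + c.
Proof.
move=> si; apply/rowP => j; rewrite !mxE.
under eq_bigr => r _ do rewrite mxE mulrDr.
rewrite big_split /= [X in _ + X](bigD1 i) //= [X in _ + (_ + X)]big1 ?addr0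
  => [|r /negbTE ->].
  by rewrite eqxx si !mul1r.
by rewrite mul0r mulr0.
Qed.

Lemma card_cond_event (s : 'rV[F2]_k) :
  #|[pred Ac : 'M[F2]_(k, n) * 'rV[F2]_n | s 0 i == 1]|
  = ((s 0 i == 1)%R * (2 ^ (k * n) * 2 ^ n))%N.
Proof.
have [_ | _] := eqVneq (s 0 i) 1; last by rewrite mul0n; apply: eq_card0.
by rewrite mul1n eq_cardT // -cardT card_prod card_mx card_Fp // card_rV_F2.
Qed.

Hypothesis p_le_n : (p <= n)%N.

Lemma card_hyb_event (M : 'M[F2]_(k, n)) (y v : 'rV[F2]_(n - p))
    (s : 'rV[F2]_k) :
  #|[pred Ac : 'M[F2]_(k, n) * 'rV[F2]_n |
     [&& Aprime i Ac.1 Ac.2 == M, zval g Ac.1 s v == y & s 0 i == 1]]|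
  = ((s 0 i == 1)%R * 2 ^ p)%N.
Proof.
have [si | _] := eqVneq (s 0 i) 1; last first.
  by rewrite mul0n; apply: eq_card0 => Ac; rewrite !inE /= !andbF.
set C := [set c | fmap g (s *m M + c) + v == y].
have card_C : #|C| = (2 ^ p)%N.
  rewrite -(@card_fmap_fiber _ _ g p_le_n (y - v)) -(card_preimset _ (addrI (s *m M))).
  by apply: eq_card => c; rewrite !inE [RHS]eq_sym subr_eq eq_sym.
have inj_key : injective (fun c => (Aprime i M c, c)) by move=> c c' [].
rewrite mul1n -card_C -(card_imset _ inj_key); apply: eq_card => -[A c] /=.
rewrite inE andbT; apply/andP/imsetP => [[/eqP eqM zy] | [c' c'C [-> ->]]].
  exists c; last by rewrite -eqM Aprime_invol.
  by rewrite inE -eqM mulmx_Aprime // addF2mxK.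
rewrite inE in c'C.
by rewrite Aprime_invol /zval mulmx_Aprime.
Qed.

End Hybrid.

Theorem lemma1 (R : realFieldType) (eta : R) (k n p : nat)
  (g : 'rV[F2]_p -> F2) (i : 'I_k) :
  (0 < p)%N -> (p <= n)%N -> 0 <= eta -> eta <= 1 ->
  anf_nonlinear g ->
  forall (M : 'M[F2]_(k, n)) (y : 'rV[F2]_(n - p)),
    hyb_cond eta g i M y = (2 ^+ (k * n + (n - p)))^-1.
Proof.
move=> _ p_le_n _ _ _ M y.
set P := [pred s : 'rV[F2]_k | s 0 i == 1].
rewrite /hyb_cond (Pr_count _ P (2 ^ p)) => [|s v]; last first.
  exact: card_hyb_event.
rewrite (Pr_count _ P (2 ^ (k * n) * 2 ^ n)) => [|s v]; last first.
  exact: card_cond_event.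
have P_neq0 : (#|P| != 0)%N.
  by apply/eqP => /card0_eq /(_ (delta_mx 0 i)); rewrite !inE mxE !eqxx.
have mass_neq0 : uniform_mass R k n != 0.
  by rewrite /uniform_mass !mulf_neq0 // invr_eq0 expf_neq0 // pnatr_eq0.
have -> : (2 ^ (k * n) * 2 ^ n = 2 ^ (k * n + (n - p)) * 2 ^ p)%N.
  by rewrite -!expnD -addnA subnK.
rewrite !natrM !natrX; field.
by rewrite mass_neq0 pnatr_eq0 P_neq0 !expf_neq0 // pnatr_eq0.
Qed.
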